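(* Let $G$ be a torsion-free group, $\mathbb{F}$ a field, $\alpha$ a zero divisor in $\mathbb{F}[G]$ with $|supp(\alpha)|=4$ and $|S_\alpha|=12$, and $\beta$ a non-zero element of $\mathbb{F}[G]$ with $\alpha\beta=0$. Let $B=supp(\alpha)$, $C=supp(\beta)$. If $s\in\Delta^i$ and $s'\in\Delta^j$ with $s\ne s'$ and $i,j\in\{2,3,4\}$, then $|\mathcal{V}(s)\cap\mathcal{V}(s')|\le1$.
   Context: $supp(\gamma)=\{x\in G:\gamma_x\ne0\}$; $S_\alpha=\{h^{-1}h':h\ne h',\ h,h'\in supp(\alpha)\}$. $BC=\{bc:b\in B,c\in C\}$. For $s\in BC$, $R(s)=\{(b,c)\in B\times C: bc=s\}$ and $r(s)=|R(s)|$; $\Delta^i=\{s\in BC: r(s)=i\}$; $\mathcal{V}(s)=\{g\in C:(sg^{-1},g)\in R(s)\}$. *)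

From HB Require Import structures.
From mathcomp Require Import all_boot all_order all_algebra.
From mathcomp Require Import finmap.
Set Implicit Arguments. Unset Strict Implicit. Unset Printing Implicit Defensive.
Import GRing.Theory.
Local Open Scope fset_scope.

Definition is_group (G : Type) (mul : G -> G -> G) (one : G) (inv : G -> G) : Prop :=
  [/\ (forall x y z, mul x (mul y z) = mul (mul x y) z),
      (forall x, mul one x = x), (forall x, mul x one = x),
      (forall x, mul (inv x) x = one) & (forall x, mul x (inv x) = one)].

Definition gpow (G : Type) (mul : G -> G -> G) (one : G) (g : G) (n : nat) : G :=
  iter n (mul g) one.

Definition torsion_free (G : Type) (mul : G -> G -> G) (one : G) : Prop :=
  forall g n, (0 < n)%N -> gpow mul one g n = one -> g = one.

(* Elements of the group ring F[G]: finitely supported functions G -> F. *)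
Definition group_ring (G : choiceType) (F : fieldType) :=
  {fsfun G -> F with 0%R}.

Definition supp (G : choiceType) (F : fieldType) (a : group_ring G F) : {fset G} :=
  finsupp a.

Definition gr_mul (G : choiceType) (F : fieldType) (mul : G -> G -> G) (inv : G -> G)
  (a b : group_ring G F) (x : G) : F :=
  (\sum_(h <- supp a) a h * b (mul (inv h) x))%R.

Definition S_set (G : choiceType) (F : fieldType) (mul : G -> G -> G) (inv : G -> G)
  (a : group_ring G F) : {fset G} :=
  [fset mul (inv h) h' | h in supp a, h' in supp a & h != h'].

Definition prod_set (G : choiceType) (mul : G -> G -> G) (B C : {fset G}) : {fset G} :=
  [fset mul b c | b in B, c in C].

Definition R_set (G : choiceType) (mul : G -> G -> G) (B C : {fset G}) (s : G)
  : {fset G * G} :=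
  [fset p in B `*` C | mul p.1 p.2 == s].

Definition r_num (G : choiceType) (mul : G -> G -> G) (B C : {fset G}) (s : G) : nat :=
  #|` R_set mul B C s|.

Definition Delta (G : choiceType) (mul : G -> G -> G) (B C : {fset G}) (i : nat)
  : {fset G} :=
  [fset s in prod_set mul B C | r_num mul B C s == i].

Definition V_set (G : choiceType) (mul : G -> G -> G) (inv : G -> G)
  (B C : {fset G}) (s : G) : {fset G} :=
  [fset g in C | (mul s (inv g), g) \in R_set mul B C s].

From HB Require Import structures.
From mathcomp Require Import all_boot all_order all_algebra.
From mathcomp Require Import finmap.
Set Implicit Arguments. Unset Strict Implicit. Unset Printing Implicit Defensive.
Local Open Scope fset_scope.

(* If g1 <> g2 both lie in V(s) and V(s'), then b = s g1^-1, b' = s g2^-1,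
   c = s' g1^-1, c' = s' g2^-1 all lie in B = supp(alpha), and
   b^-1 b' = g1 g2^-1 = c^-1 c'.  The pairs (b, b') and (c, c') are distinct
   pairs of distinct elements of B (as s <> s'), so the 4 * 3 = 12 ordered
   pairs of distinct elements of B yield at most 11 quotients h^-1 h',
   contradicting |S_alpha| = 12. *)

Lemma cardfsM (T U : choiceType) (A : {fset T}) (B : {fset U}) :
  #|` A `*` B| = #|` A| * #|` B|.
Proof.
rewrite /fsetM (perm_size (enum_imfset2 _ _)) ?size_allpairs //.
by move=> [x y] [x' y'] _ _ /= [-> ->].
Qed.

Lemma cardfs_le1 (T : choiceType) (A : {fset T}) :
  {in A &, forall x y, x = y} -> #|` A| <= 1.
Proof.
move=> A_const; case: (fset_0Vmem A) => [->|[x xA]]; first by rewrite cardfs0.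
rewrite -(cardfs1 x); apply/fsubset_leq_card/fsubsetP => y yA.
by rewrite inE (A_const y x).
Qed.

Section OffDiagonal.
Variable T : choiceType.
Implicit Types A : {fset T}.

Definition offdiag A : {fset T * T} := A `*` A `\` [fset (a, a) | a in A].

Lemma in_offdiag A p :
  (p \in offdiag A) = [&& p.1 \in A, p.2 \in A & p.1 != p.2].
Proof.
case: p => x y; rewrite !inE /=.
have -> : ((x, y) \in [fset (a, a) | a in A]) = (x \in A) && (x == y).
  by apply/imfsetP/andP => [[a aA [-> ->]]|[xA /eqP <-]]; [rewrite aA eqxx | exists x].
by case: (x \in A); case: (y \in A); case: (x == y).
Qed.

Lemma card_offdiag A : #|` offdiag A| = #|` A| * (#|` A|).-1.
Proof.
rewrite cardfsDS ?cardfsM; last first.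
  by apply/fsubsetP => _ /imfsetP[a aA ->]; rewrite inE /= aA.
rewrite card_in_imfset /=; last by move=> a b _ _ [].
by rewrite -[X in _ - X]muln1 -mulnBr subn1.
Qed.

Lemma imfset2_offdiag (U : choiceType) (f : T -> T -> U) A :
  [fset f h h' | h in A, h' in A & h != h'] = [fset f p.1 p.2 | p in offdiag A].
Proof.
apply/fsetP => u; apply/imfset2P/imfsetP => /=.
  move=> [h hA [h' /[!inE] /andP[h'A neq_hh'] ->]].
  by exists (h, h'); rewrite // in_offdiag hA h'A.
case=> -[h h'] /[!in_offdiag] /and3P[/= hA h'A neq_hh'] ->.
by exists h => //; exists h' => //; rewrite !inE h'A.
Qed.

Lemma offdiag_inj_card (U : choiceType) (f : T -> T -> U) A :
  #|` [fset f h h' | h in A, h' in A & h != h']| = #|` A| * (#|` A|).-1 ->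
  {in offdiag A &, injective (fun p => f p.1 p.2)}.
Proof.
by rewrite imfset2_offdiag -card_offdiag => /eqP /card_in_imfsetP.
Qed.

End OffDiagonal.

Lemma lquot_divg (gT : groupType) (s g g' : gT) :
  ((s / g)^-1 * (s / g') = g / g')%g.
Proof. by rewrite invgF divgKA. Qed.

Section GroupAxioms.
Variables (G : choiceType) (mul : G -> G -> G) (one : G) (inv : G -> G).
Hypothesis G_group : is_group mul one inv.

Definition group_of_axioms of is_group mul one inv : Type := G.

Let G_mulA : associative mul. Proof. by case: G_group. Qed.
Let G_mul1g : left_id one mul. Proof. by case: G_group. Qed.
Let G_mulg1 : right_id one mul. Proof. by case: G_group. Qed.
Let G_mulVg : left_inverse one inv mul. Proof. by case: G_group. Qed.
Let G_mulgV : right_inverse one inv mul. Proof. by case: G_group. Qed.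

HB.instance Definition _ := Choice.on (group_of_axioms G_group).
HB.instance Definition _ :=
  isGroup.Build (group_of_axioms G_group) G_mulA G_mul1g G_mulg1 G_mulVg G_mulgV.

(* {fset G} is not convertible to {fset gT} (the choice structure is
   repackaged), so statements stay in G and only identities between
   elements are borrowed from gT, by conversion. *)
Local Notation gT := (group_of_axioms G_group).

Lemma in_V_set B C s g :
  (g \in V_set mul inv B C s) = (g \in C) && (mul s (inv g) \in B).
Proof.
have divgK x y : mul (mul x (inv y)) y = x := @mulgVK gT y x.
by rewrite !inE /= divgK eqxx andbT; case: (g \in C) (_ \in B) => -[].
Qed.

Lemma card_V_setI_le1 B C s s' :
  {in offdiag B &, injective (fun p => mul (inv p.1) p.2)} -> s != s' ->
  #|` V_set mul inv B C s `&` V_set mul inv B C s'| <= 1.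
Proof.
move=> lquot_inj neq_ss'; apply: cardfs_le1 => g g'.
rewrite !in_fsetI !in_V_set.
move=> /andP[/andP[_ sgB] /andP[_ s'gB]] /andP[/andP[_ sg'B] /andP[_ s'g'B]].
have [//|neq_gg'] := eqVneq g g'.
have offdiag_div t :
    mul t (inv g) \in B -> mul t (inv g') \in B ->
    (mul t (inv g), mul t (inv g')) \in offdiag B.
  by move=> tgB tg'B; rewrite in_offdiag tgB tg'B (inj_eq (@divgI gT t)).
have same_lquot : mul (inv (mul s (inv g))) (mul s (inv g'))
                = mul (inv (mul s' (inv g))) (mul s' (inv g')).
  exact: etrans (@lquot_divg gT s g g') (esym (@lquot_divg gT s' g g')).
have [eq_sg _] := lquot_inj _ _
  (offdiag_div _ sgB sg'B) (offdiag_div _ s'gB s'g'B) same_lquot.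
by rewrite (@mulIg gT _ _ _ eq_sg) eqxx in neq_ss'.
Qed.

End GroupAxioms.

Theorem mainTheorem17 (G : choiceType) (mul : G -> G -> G) (one : G) (inv : G -> G)
  (F : fieldType) (alpha beta : group_ring G F) :
  is_group mul one inv ->
  torsion_free mul one ->
  #|` supp alpha| = 4%N ->
  #|` S_set mul inv alpha| = 12%N ->
  (exists x : G, beta x != 0%R) ->
  (forall x, gr_mul mul inv alpha beta x = 0%R) ->
  forall (s s' : G) (i j : nat),
    i \in [:: 2; 3; 4]%N -> j \in [:: 2; 3; 4]%N ->
    s \in Delta mul (supp alpha) (supp beta) i ->
    s' \in Delta mul (supp alpha) (supp beta) j ->
    s != s' ->
    (#|` V_set mul inv (supp alpha) (supp beta) s
         `&` V_set mul inv (supp alpha) (supp beta) s'| <= 1)%N.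
Proof.
move=> G_group _ card_supp card_S _ _ s s' i j _ _ _ _ neq_ss'.
have /offdiag_inj_card lquot_inj :
    #|` S_set mul inv alpha| = #|` supp alpha| * (#|` supp alpha|).-1.
  by rewrite card_supp card_S.
exact: (card_V_setI_le1 G_group (supp beta) lquot_inj neq_ss').
Qed.
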